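(* In the minor-player mean-field equilibrium, the mean inventory $E(t)=\int q\,m(t,dq)$ is the unique $C^2([0,T])$ solution of the two-point boundary value problem $$2\eta E''(t)+\gamma E'(t)=-\gamma^0\nu^0_t,\quad t\in[0,T],\qquad E(0)=E_0,\qquad E'(T)+\frac{\alpha}{\eta}E(T)=0,$$ and the remaining coefficients are recovered by $\mu_t=E'(t)$, $h_1(t)=2\eta E'(t)-2h_2(t)E(t)$, $h_0(t)=\frac1{4\eta}\int_t^Th_1(s)^2ds$, with $h_2(t)=-\frac{\alpha\eta}{\eta+\alpha(T-t)}$.
   Context: Competitive market with constants $\gamma^0,\gamma,\eta,\alpha>0$, horizon $T$, continuous major lit rate $t\mapsto\nu^0_t$, and initial minor inventory distribution $m_0$ with mean $E_0$. The equilibrium $(h,m,\mu)$ satisfies: $\partial_th+\frac1{4\eta}(\partial_qh)^2+(\gamma^0\nu^0_t+\gamma\mu_t)q=0$, $h(T,q)=-\alpha q^2$; $\partial_tm+\partial_q(m\,\partial_qh/(2\eta))=0$, $m(0)=m_0$; $\mu_t=\int\frac{\partial_qh(t,q)}{2\eta}m(t,dq)$; and $h(t,q)=h_0(t)+h_1(t)q+h_2(t)q^2$ with $h_0(T)=h_1(T)=0$, $h_2(T)=-\alpha$. *)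

From HB Require Import structures.
From mathcomp Require Import all_boot all_order all_algebra.
From mathcomp Require Import all_classical all_reals all_analysis.
Set Implicit Arguments. Unset Strict Implicit. Unset Printing Implicit Defensive.
Import Order.TTheory GRing.Theory Num.Theory.
Import numFieldNormedType.Exports.
Local Open Scope classical_set_scope.
Local Open Scope ring_scope.

Section Defs.
Context {R : realType}.

(* Admissible test functions for the weak form of the continuity equation:
   C^1 functions R -> R with bounded derivative (this class contains q |-> q). *)
Definition C1b_test (phi : R -> R) : Prop :=
  (forall x : R, derivable phi x 1) /\ continuous (derive1 phi) /\
  (exists M : R, forall x : R, `|derive1 phi x| <= M).

(* m : [0,T] -> P(R) is a weak solution of  d_t m + d_q (m v) = 0  on [0,T]:
   every m_t (t in [0,T]) has a finite first moment, and for every admissible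
   test function phi, t |-> int phi dm_t is continuous on [0,T] and
   differentiable on ]0,T[ with derivative int phi'(q) v(t,q) m_t(dq). *)
Definition weak_continuity_eq (T : R)
    (m : R -> probability (measurableTypeR R) R) (v : R -> R -> R) : Prop :=
  (forall t : R, 0 <= t <= T -> (m t).-integrable setT (fun q : R => (q%:E)%E)) /\
  forall phi : R -> R, C1b_test phi ->
    {within `[0, T], continuous (fun t : R => \int[m t]_q phi q)} /\
    (forall t : R, 0 < t < T ->
       is_derive t 1 (fun s : R => \int[m s]_q phi q)
                     (\int[m t]_q (derive1 phi q * v t q))).

(* F is in C^2([0,T]) with first and second derivatives F1, F2 on [0,T]:
   F, F1, F2 are continuous on [0,T], F' = F1 and F1' = F2 on ]0,T[
   (so F1, F2 are the continuous extensions of F', F'' to [0,T]). *)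
Definition C2_on (T : R) (F F1 F2 : R -> R) : Prop :=
  {within `[0, T], continuous F} /\
  {within `[0, T], continuous F1} /\
  {within `[0, T], continuous F2} /\
  (forall t : R, 0 < t < T -> is_derive t 1 F (F1 t) /\ is_derive t 1 F1 (F2 t)).

Definition mean_bvp (gamma0 gamma eta alpha T E0 : R) (nu0 : R -> R)
    (F F1 F2 : R -> R) : Prop :=
  (forall t : R, 0 <= t <= T -> 2 * eta * F2 t + gamma * F1 t = - (gamma0 * nu0 t)) /\
  F 0 = E0 /\
  F1 T + alpha / eta * F T = 0.

End Defs.

From HB Require Import structures.
From mathcomp Require Import all_boot all_order all_algebra.
From mathcomp Require Import all_classical all_reals all_analysis.
From mathcomp Require Import ring lra.
Import Order.TTheory GRing.Theory Num.Theory.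
Import numFieldNormedType.Exports.
Local Open Scope classical_set_scope.
Local Open Scope ring_scope.

(* Under the quadratic ansatz the HJB equation splits into ODEs for the
   coefficients: h2' = -h2^2/eta, h1' = -h1 h2/eta - (gamma0 nu0 + gamma mu) and
   h0' = -h1^2/(4 eta).  The first is a Riccati equation with terminal value
   -alpha, whose solution is unique because (y - z)^2 e^(L t) is nondecreasing
   for L large and vanishes at T; h0 is then integrated backwards from h0(T) = 0.
   Testing the continuity equation against q gives E' = mu, and the consistency
   condition makes mu = h1/(2 eta) + h2 E/eta affine in E, which yields the
   boundary value problem.  For two of its solutions the difference D satisfies
   2 eta D'' + gamma D' = 0, so D' e^(gamma t/(2 eta)) and D + 2 eta D'/gamma are
   constant, and the two boundary conditions force D = 0. *)

Section within_continuous.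
Context {R : realType} {A : set R}.

Lemma within_continuousD {f g : R -> R} : {within A, continuous f} ->
  {within A, continuous g} -> {within A, continuous (fun x => f x + g x)}.
Proof. by move=> cf cg x; apply: continuousD (cf x) (cg x). Qed.

Lemma within_continuousM {f g : R -> R} : {within A, continuous f} ->
  {within A, continuous g} -> {within A, continuous (fun x => f x * g x)}.
Proof. by move=> cf cg x; apply: continuousM (cf x) (cg x). Qed.

Lemma within_continuousN {f : R -> R} : {within A, continuous f} ->
  {within A, continuous (fun x => - f x)}.
Proof. by move=> cf x; apply: continuousN (cf x). Qed.

Lemma within_continuous_cst (c : R) : {within A, continuous (fun _ : R => c)}.
Proof. by move=> x; apply: cvg_cst. Qed.

Lemma within_continuous_eq {f g : R -> R} : {in A, f =1 g} ->
  {within A, continuous f} -> {within A, continuous g}.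
Proof. exact: subspace_eq_continuous. Qed.

End within_continuous.

Section calculus.
Context {R : realType}.
Implicit Types (a b c d s t x : R) (f g : R -> R).

Lemma itv_ooW {a b t} : a < t < b -> a <= t <= b.
Proof. by case/andP=> /ltW -> /ltW ->. Qed.

Lemma is_derive_quadratic a b c x :
  is_derive x 1 (fun q : R => a + b * q + c * q ^+ 2) (b + 2 * c * x).
Proof. by apply: is_derive_eq; rewrite /GRing.scale /= !mulr1 add0r mul1r; ring. Qed.

Lemma is_derive_continuous f x d : is_derive x 1 f d -> {for x, continuous f}.
Proof. by move=> [df _]; apply: differentiable_continuous; apply/derivable1_diffP. Qed.

Lemma is_derive_expRM a s :
  is_derive s 1 (fun s => expR (a * s)) (a * expR (a * s)).
Proof.
have da : is_derive s 1 ( *%R a) a by apply: is_derive_eq; rewrite /GRing.scale /= mulr1.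
by rewrite mulrC; apply: is_derive1_comp (is_derive_expR (a * s)) da.
Qed.

Lemma continuous_expRM a : continuous (fun s => expR (a * s)).
Proof. by move=> x; apply: is_derive_continuous (is_derive_expRM a x). Qed.

Lemma is_derive_itvoo_eq f g a b t d : (forall s, a < s < b -> f s = g s) ->
  a < t < b -> is_derive t 1 f d -> is_derive t 1 g d.
Proof.
move=> fg tab; apply: near_eq_is_derive.
have /near_in_itvoo : t \in `]a, b[ by rewrite in_itv.
by apply: filterS => s; rewrite in_itv /=; apply: fg.
Qed.

Lemma ger0_is_derive_ndecr f df a b : {within `[a, b], continuous f} ->
  (forall t, a < t < b -> is_derive t 1 f (df t)) ->
  (forall t, a < t < b -> 0 <= df t) ->
  forall x y, a <= x -> x <= y -> y <= b -> f x <= f y.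
Proof.
move=> cf fd df_ge0; apply: ger0_derive1_ndecr => // x; rewrite in_itv /= => xab.
  by case: (fd _ xab).
by have dfx := fd _ xab; rewrite derive1E derive_val df_ge0.
Qed.

Lemma is_derive0_itv_cst f a b : {within `[a, b], continuous f} ->
  (forall t, a < t < b -> is_derive t 1 f 0) ->
  forall x, a <= x <= b -> f x = f b.
Proof.
move=> cf fd x /andP[ax xb]; apply/le_anti/andP; split.
  exact: (@ger0_is_derive_ndecr f (fun=> 0) a b cf fd).
have := @ger0_is_derive_ndecr _ (fun=> 0) a b (within_continuousN cf).
move=> /(_ _ _ x b ax xb (lexx b)); rewrite lerN2; apply=> // t /fd dft.
by rewrite -oppr0; apply: is_deriveN.
Qed.

Lemma Rintegral_itv_is_derive {F f : R -> R} {a b : R} : {within `[a, b], continuous F} ->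
  {within `[a, b], continuous f} -> (forall x, a < x < b -> is_derive x 1 F (f x)) ->
  forall t, a <= t <= b -> \int[lebesgue_measure]_(s in `[t, b]) f s = F b - F t.
Proof.
move=> cF cf dF t /andP[le_at le_tb]; have [lt_tb|le_bt] := ltP t b; last first.
  have -> : t = b by apply/le_anti; rewrite le_tb le_bt.
  by rewrite set_itv1 Rintegral_set1 subrr.
have sub : `[t, b] `<=` `[a, b].
  by move=> x /=; rewrite !in_itv /= => /andP[tx ->]; rewrite (le_trans le_at tx).
have [_ cFt cFb] := (continuous_within_itvP _ lt_tb).1 (continuous_subspaceW sub cF).
have dFtb x : t < x < b -> is_derive x 1 F (f x).
  by case/andP=> tx xb; apply: dF; rewrite xb (le_lt_trans le_at tx).
have dcF : derivable_oo_LRcontinuous F t b.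
  by split=> // x; rewrite in_itv /= => /dFtb [].
have F'f : {in `]t, b[, F^`()%classic =1 f}.
  by move=> x; rewrite in_itv /= => /dFtb dx; rewrite derive1E derive_val.
by rewrite /Rintegral (continuous_FTC2 lt_tb (continuous_subspaceW sub cf) dcF F'f).
Qed.

End calculus.

Section riccati.
Context {R : realType} {T eta : R}.
Hypothesis eta_gt0 : 0 < eta.
Let eta_neq0 : eta != 0 := lt0r_neq0 eta_gt0.

Lemma riccati_terminal_unique {y z : R -> R} :
  {within `[0, T], continuous y} -> {within `[0, T], continuous z} ->
  (forall t, 0 < t < T -> is_derive t 1 y (- (y t ^+ 2) / eta)) ->
  (forall t, 0 < t < T -> is_derive t 1 z (- (z t ^+ 2) / eta)) ->
  y T = z T -> forall t, 0 <= t <= T -> y t = z t.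
Proof.
move=> yc zc dy dz yzT t /andP[t_ge0 t_leT].
have [M MI Mmax] := EVT_max (le_trans t_ge0 t_leT) (within_continuousD yc zc).
pose L := 2 * `|y M + z M| / eta.
pose f s := (y s - z s) * (y s - z s) * expR (L * s).
have f_ge0 s : 0 <= f s by rewrite /f -expr2 mulr_ge0 ?sqr_ge0 ?expR_ge0.
have : f t <= f T.
  apply: (@ger0_is_derive_ndecr _ f
    (fun s => (y s - z s) ^+ 2 * (2 * (`|y M + z M| - (y s + z s)) / eta) * expR (L * s))
    0 T) => //.
  - have ce := continuous_subspaceT (A := `[0, T]) (continuous_expRM L).
    have cyz := within_continuousD yc (within_continuousN zc).
    exact: within_continuousM (within_continuousM cyz cyz) ce.
  - move=> s sI; have dys := dy s sI; have dzs := dz s sI; have de := is_derive_expRM L s.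
    by apply: is_derive_eq; rewrite /GRing.scale /= /L; field.
  - move=> s /andP[s_gt0 s_ltT]; rewrite mulr_ge0 ?expR_ge0 // mulr_ge0 ?sqr_ge0 //.
    rewrite divr_ge0 ?(ltW eta_gt0) // mulr_ge0 // subr_ge0.
    apply: le_trans (ler_norm _); apply: Mmax.
    by rewrite in_itv /= !ltW.
rewrite {2}/f yzT subrr mul0r mul0r => ft_le0.
have /eqP : f t = 0 by apply/le_anti; rewrite ft_le0 f_ge0.
by rewrite mulf_eq0 (gt_eqF (expR_gt0 _)) orbF mulf_eq0 orbb subr_eq0 => /eqP.
Qed.

Lemma riccati_terminal_solution {alpha : R} {y : R -> R} : 0 <= alpha ->
  {within `[0, T], continuous y} ->
  (forall t, 0 < t < T -> is_derive t 1 y (- (y t ^+ 2) / eta)) ->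
  y T = - alpha -> forall t, 0 <= t <= T -> y t = - (alpha * eta / (eta + alpha * (T - t))).
Proof.
move=> alpha_ge0 yc dy yT.
pose p s := eta + alpha * (T - s).
have p_gt0 s : s <= T -> 0 < p s.
  by move=> sT; rewrite /p ltr_pwDl // mulr_ge0 // subr_ge0.
pose k s := - (alpha * eta) * (p s)^-1.
have dk s : s <= T -> is_derive s 1 k (- (k s ^+ 2) / eta).
  move=> sT; have dp : is_derive s 1 p (- alpha).
    by apply: is_derive_eq; rewrite /GRing.scale /=; ring.
  have dpV := is_deriveV (lt0r_neq0 (p_gt0 s sT)) dp.
  have p_neq0 : p s != 0 by rewrite gt_eqF ?p_gt0.
  by apply: is_derive_eq; rewrite /GRing.scale /= /k; field; rewrite eta_neq0 p_neq0.
have kc : {within `[0, T], continuous k}.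
  apply: continuous_in_subspaceT => s; rewrite inE /= in_itv /= => /andP[_ sT].
  exact: is_derive_continuous (dk s sT).
have dk' s : 0 < s < T -> is_derive s 1 k (- (k s ^+ 2) / eta).
  by case/andP=> _ /ltW /dk.
have ykT : y T = k T.
  by rewrite yT /k /p subrr mulr0 addr0; field.
by move=> t tI; rewrite -mulNr (riccati_terminal_unique yc kc dy dk' ykT t tI).
Qed.

End riccati.

Section mean.
Context {R : realType}.

Lemma C1b_test_id : C1b_test (@id R).
Proof.
have d1 x : derive1 id x = 1 :> R.
  by rewrite derive1E; have [_ ->] := @is_derive_id _ R x 1.
split; first by move=> x; apply: derivable_id.
split; last by exists 1 => x; rewrite d1 normr1.
by rewrite (_ : derive1 id = fun=> 1); [apply: cst_continuous | apply/funext].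
Qed.

Lemma Rintegral_affine (P : probability (measurableTypeR R) R) (a b : R) :
  P.-integrable setT (fun q : R => q%:E)%E ->
  \int[P]_q (a + b * q) = a + b * \int[P]_q q.
Proof.
move=> Pint; rewrite RintegralD //; last first.
- rewrite (_ : EFin \o _ = fun x => b%:E * x%:E)%E; last first.
    by apply/funext => x; rewrite /= EFinM.
  exact: integrableZl.
- exact: finite_measure_integrable_cst.
rewrite Rintegral_cst // RintegralZl //.
rewrite [fine _](_ : _ = 1) ?mulr1 // -[RHS]/(fine 1%E).
by congr fine; apply: probability_setT.
Qed.

Lemma weak_continuity_mean {T : R} {m : R -> probability (measurableTypeR R) R}
    {v : R -> R -> R} : weak_continuity_eq T m v ->
  {within `[0, T], continuous (fun t => \int[m t]_q q)} /\
  forall t, 0 < t < T ->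
    is_derive t 1 (fun s => \int[m s]_q q) (\int[m t]_q v t q).
Proof.
move=> [_ /(_ _ C1b_test_id)[Ec dE]]; split=> // t /dE.
rewrite (@eq_Rintegral _ _ _ (m t) _ (fun q => v t q)) // => q _.
by rewrite derive1E; have [_ ->] := @is_derive_id _ R q 1; rewrite mul1r.
Qed.

End mean.

Section quadratic_ansatz.
Context {R : realType} {T eta : R} {h : R -> R -> R} {h0 h1 h2 : R -> R}.
Hypothesis hE : forall t, 0 <= t <= T -> forall q, h t q = h0 t + h1 t * q + h2 t * q ^+ 2.

Lemma ansatz_derive1 t q : 0 <= t <= T -> derive1 (h t) q = h1 t + 2 * h2 t * q.
Proof.
move=> tI; have -> : h t = fun q => h0 t + h1 t * q + h2 t * q ^+ 2.
  by apply/funext => x; rewrite hE.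
by rewrite derive1E; have [_ ->] := is_derive_quadratic (h0 t) (h1 t) (h2 t) q.
Qed.

Lemma ansatz_coefE t : 0 <= t <= T ->
  [/\ h0 t = h t 0, h1 t = (h t 1 - h t (-1)) / 2
    & h2 t = (h t 1 + h t (-1)) / 2 - h t 0].
Proof. by move=> tI; rewrite !hE //; split; field. Qed.

Section hjb.
Context {c : R -> R}.
Hypotheses (eta_gt0 : 0 < eta)
  (h_cont : forall q, {within `[0, T], continuous (fun s => h s q)})
  (hjb : forall t, 0 < t < T -> forall q, derivable (fun s => h s q) t 1 /\
     derive1 (fun s => h s q) t + 1 / (4 * eta) * (derive1 (h t) q) ^+ 2
       + c t * q = 0).
Let eta_neq0 : eta != 0 := lt0r_neq0 eta_gt0.

Lemma ansatz_coef_continuous :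
  [/\ {within `[0, T], continuous h0}, {within `[0, T], continuous h1}
    & {within `[0, T], continuous h2}].
Proof.
split.
- by apply: within_continuous_eq (h_cont 0) => t /[!inE] /ansatz_coefE[->].
- apply: within_continuous_eq (within_continuousM (within_continuousD (h_cont 1)
    (within_continuousN (h_cont (-1)))) (within_continuous_cst 2^-1)).
  by move=> t /[!inE] /ansatz_coefE[_ ->].
- apply: within_continuous_eq (within_continuousD (within_continuousM
    (within_continuousD (h_cont 1) (h_cont (-1))) (within_continuous_cst 2^-1))
    (within_continuousN (h_cont 0))).
  by move=> t /[!inE] /ansatz_coefE[_ _ ->].
Qed.

Lemma ansatz_coef_derive t : 0 < t < T ->
  [/\ is_derive t 1 h0 (- (h1 t ^+ 2) / (4 * eta)),
       is_derive t 1 h1 (- (h1 t * h2 t) / eta - c t)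
     & is_derive t 1 h2 (- (h2 t ^+ 2) / eta)].
Proof.
move=> tI; have dh q : is_derive t 1 (fun s => h s q)
    (- (1 / (4 * eta) * (h1 t + 2 * h2 t * q) ^+ 2) - c t * q).
  have [dq] := hjb t tI q; rewrite ansatz_derive1 ?itv_ooW // => hjb_tq.
  apply: DeriveDef => //; rewrite -derive1E.
  by apply/eqP; rewrite -subr_eq0 -hjb_tq; apply/eqP; ring.
have d0 := dh 0; have d1 := dh 1; have dN1 := dh (-1); split.
- apply: (@is_derive_itvoo_eq _ (fun s => h s 0) _ 0 T) => //.
    by move=> s /itv_ooW /ansatz_coefE[->].
  by apply: is_derive_eq; field.
- apply: (@is_derive_itvoo_eq _ (fun s => (h s 1 - h s (-1)) / 2) _ 0 T) => //.
    by move=> s /itv_ooW /ansatz_coefE[_ ->].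
  by apply: is_derive_eq; rewrite /GRing.scale /=; field.
- apply: (@is_derive_itvoo_eq _ (fun s => (h s 1 + h s (-1)) / 2 - h s 0) _ 0 T) => //.
    by move=> s /itv_ooW /ansatz_coefE[_ _ ->].
  by apply: is_derive_eq; rewrite /GRing.scale /=; field.
Qed.

Lemma ansatz_coef0E : h0 T = 0 -> forall t, 0 <= t <= T ->
  h0 t = 1 / (4 * eta) * \int[lebesgue_measure]_(s in `[t, T]) (h1 s ^+ 2).
Proof.
move=> h0T t tI; have [h0c h1c _] := ansatz_coef_continuous.
have dF s : 0 < s < T -> is_derive s 1 (fun s => - (4 * eta) * h0 s) (h1 s ^+ 2).
  move=> sI; have [dh0 _ _] := ansatz_coef_derive s sI.
  by apply: is_derive_eq; rewrite /GRing.scale /=; field.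
have h1sq : {within `[0, T], continuous (fun s => h1 s ^+ 2)}.
  by apply: within_continuous_eq (within_continuousM h1c h1c) => s _; rewrite expr2.
have Fc := within_continuousM (within_continuous_cst (- (4 * eta))) h0c.
by rewrite (Rintegral_itv_is_derive Fc h1sq dF t tI) h0T; field.
Qed.

Lemma ansatz_coef2E alpha : 0 <= alpha -> h2 T = - alpha -> forall t, 0 <= t <= T ->
  h2 t = - (alpha * eta / (eta + alpha * (T - t))).
Proof.
move=> alpha_ge0 h2T; have [_ _ h2c] := ansatz_coef_continuous.
have dh2 s : 0 < s < T -> is_derive s 1 h2 (- (h2 s ^+ 2) / eta).
  by move=> sI; have [_ _] := ansatz_coef_derive s sI.
move=> t; exact: (riccati_terminal_solution eta_gt0 alpha_ge0 h2c dh2 h2T t).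
Qed.

Section equilibrium.
Context {m : R -> probability (measurableTypeR R) R} {mu : R -> R}.
Hypotheses (wce : weak_continuity_eq T m (fun t q => derive1 (h t) q / (2 * eta)))
  (muE : forall t, 0 <= t <= T -> mu t = \int[m t]_q (derive1 (h t) q / (2 * eta))).

Lemma drift_affine t : 0 <= t <= T ->
  mu t = h1 t / (2 * eta) + h2 t / eta * \int[m t]_q q.
Proof.
move=> tI; rewrite muE // -Rintegral_affine ?wce.1 //.
by apply: eq_Rintegral => q _; rewrite ansatz_derive1 //; field.
Qed.

Lemma drift_continuous : {within `[0, T], continuous mu}.
Proof.
have [_ h1c h2c] := ansatz_coef_continuous; have [Ec _] := weak_continuity_mean wce.
apply: within_continuous_eq (within_continuousD
  (within_continuousM h1c (within_continuous_cst _))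
  (within_continuousM (within_continuousM h2c (within_continuous_cst _)) Ec)).
by move=> t /[!inE] /drift_affine ->.
Qed.

(* Differentiating the affine drift, the Riccati terms cancel and only the
   forcing [c] survives. *)
Lemma mean_C2 : {within `[0, T], continuous c} ->
  C2_on T (fun t => \int[m t]_q q) mu (fun t => - c t / (2 * eta)).
Proof.
move=> cc; have [Ec dE] := weak_continuity_mean wce.
have {}dE t : 0 < t < T -> is_derive t 1 (fun s => \int[m s]_q q) (mu t).
  by move=> tI; rewrite muE ?itv_ooW //; apply: dE.
split=> //; split; first exact: drift_continuous.
split; first exact: within_continuousM (within_continuousN cc) (within_continuous_cst _).
move=> t tI; have [_ dh1 dh2] := ansatz_coef_derive t tI; split; first exact: dE.
apply: (@is_derive_itvoo_eq _
  (fun s => h1 s / (2 * eta) + h2 s / eta * \int[m s]_q q) _ 0 T) => //.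
  by move=> s /itv_ooW /drift_affine.
have dEt := dE t tI.
by apply: is_derive_eq; rewrite /GRing.scale /= (drift_affine t (itv_ooW tI)); field.
Qed.

End equilibrium.
End hjb.
End quadratic_ansatz.

Lemma C2_onB {R : realType} {T : R} {F F1 F2 G G1 G2 : R -> R} :
  C2_on T F F1 F2 -> C2_on T G G1 G2 ->
  C2_on T (fun t => F t - G t) (fun t => F1 t - G1 t) (fun t => F2 t - G2 t).
Proof.
move=> [Fc [F1c [F2c dF]]] [Gc [G1c [G2c dG]]].
do 3 (split; first exact: within_continuousD (within_continuousN _)).
move=> t tI; have [dF0 dF1] := dF t tI; have [dG0 dG1] := dG t tI.
by split; apply: is_deriveB.
Qed.

Section mean_bvp.
Context {R : realType} {gamma eta alpha T : R}.
Hypotheses (gamma_gt0 : 0 < gamma) (eta_gt0 : 0 < eta) (alpha_ge0 : 0 <= alpha).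

Let eta_neq0 : eta != 0 := lt0r_neq0 eta_gt0.
Let k := gamma / (2 * eta).
Let k_gt0 : 0 < k. Proof. by rewrite divr_gt0 // mulr_gt0. Qed.
Let k_neq0 : k != 0 := lt0r_neq0 k_gt0.

Lemma bvp_homogeneous_first_integrals {D D1 D2 : R -> R} : C2_on T D D1 D2 ->
  (forall t, 0 <= t <= T -> 2 * eta * D2 t + gamma * D1 t = 0) ->
  forall s, 0 <= s <= T ->
  D1 s * expR (k * s) = D1 T * expR (k * T) /\ D s + D1 s / k = D T + D1 T / k.
Proof.
move=> [Dc [D1c [_ dD]]] eqD s sI.
have D2E t : 0 < t < T -> D2 t = - k * D1 t.
  move=> /itv_ooW /eqD eq_t.
  transitivity ((2 * eta * D2 t + gamma * D1 t - gamma * D1 t) / (2 * eta)); first by field.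
  by rewrite eq_t /k; field.
have cexp := continuous_subspaceT (A := `[0, T]) (continuous_expRM k).
split; move: s sI.
- apply: (@is_derive0_itv_cst _ (fun s => D1 s * expR (k * s))).
    exact: within_continuousM D1c cexp.
  move=> t tI; have [_ dD1] := dD t tI; have dexp := is_derive_expRM k t.
  by apply: is_derive_eq; rewrite /GRing.scale /= D2E //; ring.
- apply: (@is_derive0_itv_cst _ (fun s => D s + D1 s / k)).
    exact: within_continuousD Dc (within_continuousM D1c (within_continuous_cst _)).
  move=> t tI; have [dD0 dD1] := dD t tI.
  by apply: is_derive_eq; rewrite /GRing.scale /= D2E //; field.
Qed.

Lemma bvp_homogeneous_eq0 {D D1 D2 : R -> R} : C2_on T D D1 D2 ->
  (forall t, 0 <= t <= T -> 2 * eta * D2 t + gamma * D1 t = 0) ->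
  D 0 = 0 -> D1 T + alpha / eta * D T = 0 ->
  forall t, 0 <= t <= T -> D t = 0.
Proof.
move=> DC2 eqD D0 DT t tI.
have first_int := bvp_homogeneous_first_integrals DC2 eqD.
have T_ge0 : 0 <= T by case/andP: tI => /le_trans; apply.
have I0 : (0 : R) <= 0 <= T by rewrite lexx.
pose e := expR (k * T).
have e_ge1 : 1 <= e by rewrite /e -expR0 ler_expR mulr_ge0 // ltW.
have DTE : D T = D1 T * (e - 1) / k.
  have [] := first_int 0 I0; rewrite D0 add0r mulr0 expR0 mulr1 => -> D1T0.
  by rewrite -[D T](addrK (D1 T / k)) -D1T0 /e; field.
have D1T : D1 T = 0.
  have pos : 0 < 1 + alpha / eta * ((e - 1) / k).
    have : 0 <= alpha / eta * ((e - 1) / k).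
      by apply: mulr_ge0; apply: divr_ge0; rewrite ?subr_ge0 // ltW.
    lra.
  have : D1 T * (1 + alpha / eta * ((e - 1) / k)) = 0 by rewrite -DT DTE; ring.
  by move/eqP; rewrite mulf_eq0 (gt_eqF pos) orbF => /eqP.
have [D1_exp D_D1] := first_int t tI.
have D1t : D1 t = 0.
  move/eqP: D1_exp; rewrite D1T mul0r mulf_eq0 (gt_eqF (expR_gt0 _)) orbF.
  by move/eqP.
by move: D_D1; rewrite D1t DTE D1T !mul0r !addr0.
Qed.

Lemma mean_bvp_unique {gamma0 E0 : R} {nu0 F F1 F2 G G1 G2 : R -> R} :
  C2_on T F F1 F2 -> mean_bvp gamma0 gamma eta alpha T E0 nu0 F F1 F2 ->
  C2_on T G G1 G2 -> mean_bvp gamma0 gamma eta alpha T E0 nu0 G G1 G2 ->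
  forall t, 0 <= t <= T -> F t = G t.
Proof.
move=> FC2 [Fode [F0 FT]] GC2 [Gode [G0 GT]] t tI; apply/eqP; rewrite -subr_eq0; apply/eqP.
apply: (bvp_homogeneous_eq0 (C2_onB FC2 GC2) _ _ _ t tI).
- by move=> s sI; rewrite !mulrBr addrACA -opprD Fode // Gode // subrr.
- by rewrite F0 G0 subrr.
- by rewrite mulrBr addrACA -opprD FT GT subrr.
Qed.

End mean_bvp.

Theorem mainTheorem8 (R : realType) (gamma0 gamma eta alpha T : R)
  (nu0 : R -> R) (m0 : probability (measurableTypeR R) R) (E0 : R)
  (h : R -> R -> R) (m : R -> probability (measurableTypeR R) R) (mu : R -> R)
  (h0 h1 h2 : R -> R) :
  0 < gamma0 -> 0 < gamma -> 0 < eta -> 0 < alpha -> 0 < T ->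
  {within `[0, T], continuous nu0} ->
  (* m0 has mean E0 *)
  m0.-integrable setT (fun q : R => (q%:E)%E) ->
  E0 = \int[m0]_q q ->
  (* HJB equation, h(T,q) = -alpha q^2 *)
  (forall t : R, 0 < t < T -> forall q : R,
     derivable (fun s : R => h s q) t 1 /\
     derive1 (fun s : R => h s q) t + 1 / (4 * eta) * (derive1 (h t) q) ^+ 2
       + (gamma0 * nu0 t + gamma * mu t) * q = 0) ->
  (forall q : R, {within `[0, T], continuous (fun s : R => h s q)}) ->
  (forall q : R, h T q = - (alpha * q ^+ 2)) ->
  (* continuity equation, m(0) = m0 *)
  weak_continuity_eq T m (fun t q => derive1 (h t) q / (2 * eta)) ->
  m 0 = m0 ->
  (* consistency condition *)
  (forall t : R, 0 <= t <= T -> mu t = \int[m t]_q (derive1 (h t) q / (2 * eta))) ->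
  (* quadratic ansatz *)
  (forall t : R, 0 <= t <= T -> forall q : R,
     h t q = h0 t + h1 t * q + h2 t * q ^+ 2) ->
  h0 T = 0 -> h1 T = 0 -> h2 T = - alpha ->
  let E := fun t : R => \int[m t]_q q in
  exists E1 E2 : R -> R,
    C2_on T E E1 E2 /\
    mean_bvp gamma0 gamma eta alpha T E0 nu0 E E1 E2 /\
    (forall F F1 F2 : R -> R, C2_on T F F1 F2 ->
       mean_bvp gamma0 gamma eta alpha T E0 nu0 F F1 F2 ->
       forall t : R, 0 <= t <= T -> F t = E t) /\
    (forall t : R, 0 <= t <= T ->
       mu t = E1 t /\
       h1 t = 2 * eta * E1 t - 2 * h2 t * E t /\
       h0 t = 1 / (4 * eta) * \int[lebesgue_measure]_(s in `[t, T]) (h1 s ^+ 2) /\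
       h2 t = - (alpha * eta / (eta + alpha * (T - t)))).

Proof.
move=> _ gamma_gt0 eta_gt0 alpha_gt0 T_gt0 nu0c _ E0E hjb hc _ wce m0E muE hE h0T h1T h2T E.
have eta_neq0 : eta != 0 by rewrite gt_eqF.
pose c t := gamma0 * nu0 t + gamma * mu t.
have muc := drift_continuous hE eta_gt0 hc wce muE.
have cc : {within `[0, T], continuous c}.
  exact: within_continuousD (within_continuousM (within_continuous_cst _) nu0c)
    (within_continuousM (within_continuous_cst _) muc).
have EC2 := mean_C2 hE (c := c) eta_gt0 hc hjb wce muE cc.
have muE' := drift_affine hE eta_gt0 wce muE.
have Ebvp : mean_bvp gamma0 gamma eta alpha T E0 nu0 E mu (fun t => - c t / (2 * eta)).
  split; first by move=> t _; rewrite /c; field.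
  split; first by rewrite /E m0E.
  by rewrite /E muE' ?lexx ?andbT ?ltW // h1T h2T; field.
exists mu, (fun t => - c t / (2 * eta)); split=> //; split=> //; split.
  move=> F F1 F2 FC2 Fbvp t tI.
  exact: (mean_bvp_unique gamma_gt0 eta_gt0 (ltW alpha_gt0) FC2 Fbvp EC2 Ebvp t tI).
move=> t tI; split=> //; split; [|split].
- by rewrite /E muE' //; field.
- exact: (ansatz_coef0E hE (c := c) eta_gt0 hc hjb h0T t tI).
- exact: (ansatz_coef2E hE (c := c) eta_gt0 hc hjb _ (ltW alpha_gt0) h2T t tI).
Qed.
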